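(* Let $n$ be a positive integer and let $\frac{a_1}{b_1} < \frac{a_2}{b_2} < \cdots$ be the Farey sequence of order $n$. Let $k \le l$ be indices and let $\frac{a}{b}$ (in lowest terms) be a fraction of the Farey sequence of order $n$ with $\frac{a_k}{b_k} \le \frac{a}{b} \le \frac{a_l}{b_l}$. If $l - k \le \frac{n+b+1}{2b}$, then $(a_l - a_k)(b_l - b_k) \ge 0$.
   Context: The Farey sequence of order $n$ is the increasing list of all reduced fractions $\frac{a}{b}$ with $0 \le \frac{a}{b} \le 1$ and $1 \le b \le n$ (including $\frac01$ and $\frac11$), each written in lowest terms, indexed in increasing order. Two fractions $\frac{a}{b}, \frac{a'}{b'}$ in lowest terms are called similarly ordered if $(a'-a)(b'-b) \ge 0$. *)

From mathcomp Require Import all_boot all_order all_algebra.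
Set Implicit Arguments. Unset Strict Implicit. Unset Printing Implicit Defensive.
Import Order.TTheory GRing.Theory Num.Theory.

(* A fraction a/b is represented by the pair (a, b) of naturals. *)
Definition frac_val (p : nat * nat) : rat := (p.1%:R / p.2%:R)%R.

Definition frac_le (p q : nat * nat) : bool := (p.1 * q.2 <= q.1 * p.2)%N.

Definition farey_set (n : nat) : seq (nat * nat) :=
  [seq p <- [seq (a, b) | b <- iota 1 n, a <- iota 0 b.+1] | coprime p.1 p.2].

(* The Farey sequence of order n, listed in increasing order
   (index 0 here corresponds to index 1 in the paper). *)
Definition farey (n : nat) : seq (nat * nat) := sort frac_le (farey_set n).

From mathcomp Require Import all_boot all_order all_algebra zify.
Import Order.TTheory GRing.Theory Num.Theory.

(* Let a/b have index i in F_n and let a'/b' be its right neighbour, so that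
   b a' - a b' = 1 and n - b < b' <= n.  The fractions (a' - j a)/(b' - j b)
   are Farey neighbours of a/b and of each other, and two consecutive ones
   are adjacent in F_n as soon as their denominators sum to more than n; this
   holds while j < (n + b + 1)/(2b).  So every member c/d of F_n at most that
   many places to the right of a/b satisfies b c - a d = 1, and by the symmetry
   x |-> 1 - x of F_n every such member on the left satisfies a d - b c = 1.
   Two fractions related to a/b in this way are similarly ordered. *)

Set Implicit Arguments.
Unset Strict Implicit.

Definition frac_lt (p q : nat * nat) : bool := p.1 * q.2 < q.1 * p.2.

Definition frac_adj (p q : nat * nat) : bool := q.1 * p.2 == p.1 * q.2 + 1.

Definition frac_compl (p : nat * nat) : nat * nat := (p.2 - p.1, p.2).

Definition similarly_ordered (p q : nat * nat) : bool :=
  (0 <= (q.1%:Z - p.1%:Z) * (q.2%:Z - p.2%:Z))%R.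

Lemma frac_le_trans q p r : 0 < q.2 -> frac_le p q -> frac_le q r -> frac_le p r.
Proof.
rewrite /frac_le => q0 pq qr; rewrite -(leq_pmul2r q0).
have := leq_mul pq (leqnn r.2); have := leq_mul qr (leqnn p.2); nia.
Qed.

Lemma reduced_frac_inj x y x' y' : 0 < y -> 0 < y' ->
  coprime x y -> coprime x' y' -> x * y' = x' * y -> (x, y) = (x', y').
Proof.
move=> y0 y'0 cxy cxy' E.
have dvd_y : y %| y'.
  by rewrite -(@Gauss_dvdr y x) ?E ?dvdn_mull // coprime_sym.
have dvd_y' : y' %| y.
  by rewrite -(@Gauss_dvdr y' x') -?E ?dvdn_mull // coprime_sym.
have ey : y = y' by apply/eqP; rewrite eqn_leq (dvdn_leq y'0) ?(dvdn_leq y0).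
by move: E; rewrite -ey => /eqP; rewrite eqn_pmul2r // => /eqP->.
Qed.

Lemma frac_le_compl p q : p.1 <= p.2 -> q.1 <= q.2 ->
  frac_le (frac_compl q) (frac_compl p) = frac_le p q.
Proof.
case: p q => [a b] [c d] /= /subnK <- /subnK <-; rewrite /frac_le /= !addnK.
apply/idP/idP; nia.
Qed.

Lemma frac_complK p : p.1 <= p.2 -> frac_compl (frac_compl p) = p.
Proof. by case: p => a b /= ab; rewrite /frac_compl /= subKn. Qed.

Lemma frac_adj_lt p q : frac_adj p q -> frac_lt p q.
Proof. rewrite /frac_adj /frac_lt => /eqP->; lia. Qed.

Lemma frac_adj_coprime p q : frac_adj p q -> coprime q.1 q.2.
Proof.
move=> /eqP E; rewrite /coprime -dvdn1.
have : gcdn q.1 q.2 %| q.1 * p.2 by rewrite dvdn_mulr ?dvdn_gcdl.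
by rewrite E dvdn_addr // dvdn_mull ?dvdn_gcdr.
Qed.

Lemma frac_adj_between p q r : frac_adj p q -> frac_lt p r -> frac_lt r q ->
  p.2 + q.2 <= r.2.
Proof.
rewrite /frac_adj /frac_lt => /eqP E pr rq.
have -> : r.2 = p.2 * (q.1 * r.2 - r.1 * q.2) + q.2 * (r.1 * p.2 - p.1 * r.2).
  nia.
nia.
Qed.

Lemma frac_adj_sub a b c d : 0 < b < d -> frac_adj (a, b) (c, d) ->
  frac_adj (a, b) (c - a, d - b) && frac_adj (c, d) (c - a, d - b).
Proof.
rewrite /frac_adj /= => /andP[b0 bd] /eqP E.
have ac : a <= c by nia.
move: E; rewrite -(subnK ac) -(subnK (ltnW bd)) !addnK => E.
by apply/andP; split; apply/eqP; nia.
Qed.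

Lemma frac_adj_compl p q : p.1 <= p.2 -> q.1 <= q.2 ->
  frac_adj (frac_compl p) (frac_compl q) = frac_adj q p.
Proof.
case: p q => [a b] [c d] /= /subnK <- /subnK <-; rewrite /frac_adj /= !addnK.
apply/eqP/eqP; nia.
Qed.

Lemma similarly_ordered_le p q : p.1 <= q.1 -> p.2 <= q.2 -> similarly_ordered p q.
Proof. by move=> le1 le2; rewrite /similarly_ordered mulr_ge0 // subr_ge0 lez_nat. Qed.

Lemma similarly_orderedC p q : similarly_ordered p q = similarly_ordered q p.
Proof. by rewrite /similarly_ordered -mulrNN !opprB. Qed.

Lemma frac_adj_similarly_ordered p q : 0 < p.2 -> 0 < q.2 -> frac_adj p q ->
  similarly_ordered p q.
Proof.
move=> p0 q0 /eqP E; case: (leqP p.2 q.2) => h.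
  by apply: similarly_ordered_le => //; nia.
by rewrite similarly_orderedC; apply: similarly_ordered_le; [nia | exact: ltnW].
Qed.

Lemma frac_adj2_similarly_ordered p m q : 0 < p.2 -> 0 < q.2 -> q.1 <= q.2 ->
  frac_adj p m -> frac_adj m q -> similarly_ordered p q.
Proof.
case: p m q => [x y] [a b] [u v] /= y0 v0 uv /eqP /= E1 /eqP /= E2.
case: (leqP y v) => h.
  by apply: similarly_ordered_le => //=; nia.
rewrite similarly_orderedC; apply: similarly_ordered_le => /=; last exact: ltnW.
(* Otherwise b (x - u) = a (y - v) - 2 with y > v, which forces a = b = 1. *)
rewrite leqNgt; apply/negP => xu.
have b0 : 0 < b by nia.
have a0 : 0 < a by nia.
have bxu := leq_mul (leqnn b) xu.
have le1 : a * y + b <= a * v + 2 by nia.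
have le2 : a * v + a <= a * y by nia.
have [a1 b1] : a = 1 /\ b = 1 by lia.
by subst; lia.
Qed.

Lemma frac_val_le p q : 0 < p.2 -> 0 < q.2 ->
  (frac_val p <= frac_val q)%R = frac_le p q.
Proof.
move=> p0 q0; rewrite /frac_val ler_pdivrMr ?ltr0n // mulrAC.
by rewrite ler_pdivlMr ?ltr0n // -!natrM ler_nat.
Qed.

Lemma ler_nat_div (R : numFieldType) m x d : 0 < d ->
  (m%:R <= x%:R / d%:R :> R)%R = (d * m <= x).
Proof. by move=> d0; rewrite ler_pdivlMr ?ltr0n // -natrM ler_nat mulnC. Qed.

Section Farey.

Variable n : nat.

Local Notation F := (farey n).

Definition farey_frac (p : nat * nat) : bool :=
  [&& 0 < p.2, p.2 <= n, p.1 <= p.2 & coprime p.1 p.2].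

Lemma mem_farey p : (p \in F) = farey_frac p.
Proof.
rewrite /farey mem_sort mem_filter; case: p => a b; rewrite /farey_frac.
apply/andP/and4P => [[cop /(@allpairsPdep _ (fun=> nat)) [b' [a' [+ + [ea eb]]]]] | ].
  by subst; rewrite !mem_iota => /andP[b0 bn] /andP[_ ab]; split=> //; lia.
case=> b0 bn ab cop; split=> //.
apply: (@allpairs_f_dep _ (fun=> nat) _ (fun b a => (a, b)));
  by rewrite mem_iota /= in b0 bn ab *; lia.
Qed.

Lemma farey_den_gt0 p : p \in F -> 0 < p.2.
Proof. by rewrite mem_farey => /and4P[]. Qed.

Lemma farey_den_le p : p \in F -> p.2 <= n.
Proof. by rewrite mem_farey => /and4P[]. Qed.

Lemma farey_num_le p : p \in F -> p.1 <= p.2.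
Proof. by rewrite mem_farey => /and4P[]. Qed.

Lemma farey_uniq : uniq F.
Proof.
rewrite sort_uniq filter_uniq // allpairs_uniq_dep ?iota_uniq //.
  by move=> b _; exact: iota_uniq.
by move=> [x1 y1] [x2 y2] _ _ [-> ->].
Qed.

Lemma farey_sorted : sorted frac_le F.
Proof. by apply: sort_sorted => p q; exact: leq_total. Qed.

Lemma farey_frac_le_anti : {in F &, antisymmetric frac_le}.
Proof.
move=> [a b] [c d]; rewrite !mem_farey /frac_le => /and4P[b0 _ _ ab] /and4P[d0 _ _ cd].
by rewrite -eqn_leq => /eqP; apply: reduced_frac_inj.
Qed.

Lemma farey_nth_lt i j : i < j -> j < size F ->
  frac_lt (nth (0, 1) F i) (nth (0, 1) F j).
Proof.
move=> ij js; have ilt := ltn_trans ij js.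
have [iF jF] := (mem_nth (0, 1) ilt, mem_nth (0, 1) js).
have le : frac_le (nth (0, 1) F i) (nth (0, 1) F j).
  apply: (sorted_ltn_nth_in (P := mem F)) => //; last exact: farey_sorted.
  by move=> q p r qF _ _; exact: frac_le_trans (farey_den_gt0 qF).
rewrite /frac_lt ltnNge; apply/negP => ge.
have /eqP := farey_frac_le_anti iF jF (introT andP (conj le ge)).
by rewrite nth_uniq ?farey_uniq // ltn_eqF.
Qed.

Lemma farey_index_le p q : p \in F -> q \in F -> frac_le p q -> index p F <= index q F.
Proof.
move=> pF qF le; rewrite leqNgt; apply/negP => lt.
have := farey_nth_lt lt; rewrite !nth_index // index_mem => /(_ pF).
by move: le; rewrite /frac_le /frac_lt ltnNge => ->.
Qed.

Lemma farey_index_lt p q : p \in F -> q \in F -> frac_lt p q -> index p F < index q F.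
Proof.
move=> pF qF lt; have le : frac_le p q by rewrite /frac_le ltnW.
rewrite ltn_neqAle farey_index_le // andbT.
apply: contraTneq lt => /(congr1 (nth (0, 1) F)); rewrite !nth_index // => ->.
by rewrite /frac_lt ltnn.
Qed.

Lemma farey_index_adj p q : p \in F -> q \in F -> frac_adj p q -> n < p.2 + q.2 ->
  index q F = (index p F).+1.
Proof.
move=> pF qF adj big; have lt := farey_index_lt pF qF (frac_adj_lt adj).
apply/eqP; rewrite eqn_leq lt andbT leqNgt; apply/negP => gap.
have qs : index q F < size F by rewrite index_mem.
have rs : (index p F).+1 < size F by rewrite (ltn_trans gap).
have pr := farey_nth_lt (ltnSn (index p F)) rs; rewrite nth_index // in pr.
have rq := farey_nth_lt gap qs; rewrite nth_index // in rq.
have := frac_adj_between adj pr rq.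
have := mem_nth (0, 1) rs; rewrite mem_farey => /and4P[_ rn _ _].
by move=> /leq_trans/(_ rn); rewrite leqNgt big.
Qed.

Lemma farey_compl p : p \in F -> frac_compl p \in F.
Proof.
case: p => a b; rewrite !mem_farey /farey_frac /= => /and4P[b0 bn ab cop].
rewrite b0 bn leq_subr /coprime -{2}(subnK ab) gcdnDl gcdnC -gcdnDr subnK //.
Qed.

Lemma farey_rev_compl : rev (map frac_compl F) = F.
Proof.
have complK : {in F, involutive frac_compl}.
  by move=> p pF; rewrite frac_complK // farey_num_le.
apply/esym/(sorted_eq_in (leT := frac_le)).
- by move=> q p r qF _ _; exact: frac_le_trans (farey_den_gt0 qF).
- exact: farey_frac_le_anti.
- exact: farey_sorted.
- rewrite rev_sorted sorted_map; apply: (sub_in_sorted (P := mem F)) farey_sorted.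
    by move=> p q pF qF /=; rewrite frac_le_compl ?farey_num_le.
  exact/allP.
apply: uniq_perm; rewrite ?rev_uniq ?(map_inj_in_uniq (can_in_inj complK)) ?farey_uniq //.
move=> p; rewrite mem_rev; apply/idP/mapP => [pF | [q qF ->]]; last exact: farey_compl.
by exists (frac_compl p); rewrite ?complK ?farey_compl.
Qed.

Lemma nth_farey_compl i : i < size F ->
  nth (0, 1) F (size F - i.+1) = frac_compl (nth (0, 1) F i).
Proof.
move=> ilt; rewrite -{1}farey_rev_compl nth_rev size_map; last by lia.
have -> : size F - (size F - i.+1).+1 = i by lia.
by rewrite (@nth_map _ (0, 1)).
Qed.

Lemma index_farey_compl p : p \in F ->
  index (frac_compl p) F = size F - (index p F).+1.
Proof.
move=> pF; have ilt : index p F < size F by rewrite index_mem.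
rewrite -{1}(nth_index (0, 1) pF) -nth_farey_compl // index_uniq ?farey_uniq //.
by rewrite ltn_subrL (leq_ltn_trans _ ilt).
Qed.

Lemma farey_adj_mem p q : p \in F -> p.1 < p.2 -> frac_adj p q -> 0 < q.2 <= n ->
  q \in F.
Proof.
case: p q => [a b] [c d]; rewrite !mem_farey /farey_frac /=.
move=> /and4P[b0 _ _ _] ab adj /andP[d0 dn]; rewrite d0 dn (frac_adj_coprime adj) andbT /=.
move/eqP: adj => /= E; nia.
Qed.

Lemma farey_right_neighbour p : p \in F -> p.1 < p.2 ->
  exists2 q, q \in F & frac_adj p q && (n < p.2 + q.2).
Proof.
(* Bezout gives a right neighbour (K, t) of p with t < b; adding a multiple
   of p moves its denominator into (n - b, n]. *)
case: p => a b pF /= ab; move: (pF); rewrite mem_farey => /and4P[/= b0 bn _ cop].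
have [t tb] := Bezoutl a b0; rewrite gcdnC (eqP cop) => /dvdnP[K EK].
set m := (n - t) %/ b.
have adj : frac_adj (a, b) (K + m * a, t + m * b) by apply/eqP => /=; nia.
have /andP[lo hi] : t + m * b <= n < b + (t + m * b).
  by have := divn_eq (n - t) b; have := ltn_pmod (n - t) b0; rewrite -/m; lia.
exists (K + m * a, t + m * b); last by rewrite adj /=.
by apply: farey_adj_mem pF ab adj _; rewrite /= lo andbT; lia.
Qed.

(* The q's are q0 - j p, for the right neighbour q0 of p; the bound on j keeps
   the denominators of two consecutive ones summing to more than n. *)
Lemma farey_right_chain p j : p \in F -> p.1 < p.2 -> 2 * p.2 * j.+1 <= n + p.2 + 1 ->
  exists q, [/\ q \in F, index q F = index p F + j.+1, frac_adj p q
               & n < q.2 + j.+1 * p.2].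
Proof.
case: p => a b pF /= ab; elim: j => [|j IH] hj.
  have [q qF /andP[adj big]] := farey_right_neighbour pF ab.
  exists q; split=> //; first by rewrite (farey_index_adj pF qF adj big) addn1.
  by rewrite mul1n addnC.
have [[c d] [qF idx adj big]] := IH (leq_trans (leq_mul (leqnn _) (leqnSn _)) hj).
rewrite /= in adj big.
have b0 : 0 < b := farey_den_gt0 pF.
have bd : b < d by nia.
have /andP[adj_r adj_qr] := frac_adj_sub (introT andP (conj b0 bd)) adj.
have rF : (c - a, d - b) \in F.
  apply: farey_adj_mem pF ab adj_r _; rewrite /= subn_gt0 bd.
  exact: leq_trans (leq_subr _ _) (farey_den_le qF).
exists (c - a, d - b); split=> //=; last by nia.
by rewrite (farey_index_adj qF rF adj_qr) ?idx ?addnS //=; nia.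
Qed.

Lemma farey_adj_right p l : p \in F -> index p F <= l < size F ->
  2 * p.2 * (l - index p F) <= n + p.2 + 1 ->
  nth (0, 1) F l = p \/ frac_adj p (nth (0, 1) F l).
Proof.
move=> pF /andP[]; rewrite leq_eqVlt => /predU1P[<- _ _ | il ls hl].
  by left; rewrite nth_index.
right; have ab : p.1 < p.2.
  have := farey_nth_lt il ls; rewrite nth_index // /frac_lt.
  move: (farey_num_le (mem_nth (0, 1) ls)) (farey_num_le pF) (farey_den_gt0 pF).
  by case: (nth _ _ l) => c d; case: p {pF il hl} => a b /=; nia.
have [|q [qF idx adj _]] := farey_right_chain (j := (l - index p F).-1) pF ab.
  by rewrite prednK ?subn_gt0.
rewrite prednK ?subn_gt0 // subnKC in idx; last exact: ltnW.
by rewrite -idx nth_index.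
Qed.

Lemma farey_adj_left p k : p \in F -> k <= index p F ->
  2 * p.2 * (index p F - k) <= n + p.2 + 1 ->
  nth (0, 1) F k = p \/ frac_adj (nth (0, 1) F k) p.
Proof.
move=> pF ki hk; have ilt : index p F < size F by rewrite index_mem.
have ks : k < size F := leq_ltn_trans ki ilt.
have kF := mem_nth (0, 1) ks.
have [||E|adj] := farey_adj_right (l := size F - k.+1) (farey_compl pF).
- rewrite index_farey_compl //.
  by move: (index p F) ilt ki => i ilt ki; apply/andP; split; lia.
- rewrite index_farey_compl //.
  by move: (index p F) ilt ki hk => i ilt ki; rewrite (_ : _ - _ - _ = i - k) //; lia.
- left; rewrite nth_farey_compl // in E.
  by rewrite -(frac_complK (farey_num_le kF)) E frac_complK // farey_num_le.
- by right; rewrite nth_farey_compl // frac_adj_compl ?farey_num_le in adj.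
Qed.

End Farey.

Theorem lemma4 (n k l a b : nat) :
  (0 < n)%N ->
  (k <= l)%N -> (l < size (farey n))%N ->
  (a, b) \in farey n ->
  (frac_val (nth (0, 1) (farey n) k) <= frac_val (a, b))%R ->
  (frac_val (a, b) <= frac_val (nth (0, 1) (farey n) l))%R ->
  ((l - k)%:R <= (n + b + 1)%:R / (2 * b)%:R :> rat)%R ->
  (0 <= ((nth (0, 1) (farey n) l).1%:Z - (nth (0, 1) (farey n) k).1%:Z)
        * ((nth (0, 1) (farey n) l).2%:Z - (nth (0, 1) (farey n) k).2%:Z))%R.
Proof.
move=> _ kl ls abF le_k le_l; have b0 := farey_den_gt0 abF.
rewrite ler_nat_div ?muln_gt0 // => bound.
have ks := leq_ltn_trans kl ls.
have [kF lF] := (mem_nth (0, 1) ks, mem_nth (0, 1) ls).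
set i := index (a, b) (farey n).
have ki : k <= i.
  rewrite -[k](index_uniq (0, 1) ks (farey_uniq n)) farey_index_le //.
  by rewrite -frac_val_le // (farey_den_gt0 kF).
have il : i <= l.
  rewrite -[l](index_uniq (0, 1) ls (farey_uniq n)) farey_index_le //.
  by rewrite -frac_val_le // (farey_den_gt0 lF).
have bound_k : 2 * b * (i - k) <= n + b + 1.
  by rewrite (leq_trans _ bound) // leq_mul2l leq_sub2r ?orbT.
have bound_l : 2 * b * (l - i) <= n + b + 1.
  by rewrite (leq_trans _ bound) // leq_mul2l leq_sub2l ?orbT.
suff : similarly_ordered (nth (0, 1) (farey n) k) (nth (0, 1) (farey n) l) by [].
have [kF0 lF0] := (farey_den_gt0 kF, farey_den_gt0 lF).
have [-> | adj_k] := farey_adj_left abF ki bound_k;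
have [-> | adj_l] := farey_adj_right abF (introT andP (conj il ls)) bound_l.
- exact: similarly_ordered_le.
- exact: frac_adj_similarly_ordered.
- exact: frac_adj_similarly_ordered.
- exact: frac_adj2_similarly_ordered (farey_num_le lF) adj_k adj_l.
Qed.
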